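(* Let $n_1,n_2\ge1$, $n=n_1n_2$, and let $R=(r_{i,j})_{i,j=0}^{n-1}$ be a Hermitian positive definite block Toeplitz matrix with $n_2\times n_2$ blocks of size $n_1\times n_1$ (i.e. $R=(R_{b-a})_{a,b=0}^{n_2-1}$, $R_m\in\mathbb{C}^{n_1\times n_1}$, $R_{-m}=R_m^H$). Define $n_1\times n_1$ matrices $P_0,\dots,P_{n_2-1}$ and $Q_0,\dots,Q_{n_2-1}$ by $$\begin{bmatrix}P_0\\ P_1\\ \vdots\\ P_{n_2-1}\end{bmatrix}:=\big[p_{0,n-1}\ p_{1,n-1}\ \cdots\ p_{n_1-1,n-1}\big],\qquad \begin{bmatrix}Q_{n_2-1}\\ \vdots\\ Q_1\\ Q_0\end{bmatrix}:=\big[q_{0,n-n_1}\ \cdots\ q_{0,n-2}\ q_{0,n-1}\big],$$ and the diagonal matrices $V'=\mathrm{diag}(v'_{0,n-1},v'_{1,n-1},\dots,v'_{n_1-1,n-1})$, $V=\mathrm{diag}(v_{0,n-n_1},\dots,v_{0,n-2},v_{0,n-1})$. Let $L_p$ be the $n\times n$ block upper triangular block Toeplitz matrix whose $(a,b)$ block is $P_{b-a}^T$ for $b\ge a$ and $0$ for $b<a$, and $L_q$ the $n\times n$ block Toeplitz matrix whose $(a,b)$ block is $Q_{n_2-(b-a)}^T$ for $b>a$ and $0$ for $b\le a$ ($0\le a,b\le n_2-1$). Let $D(M)$ denote the $n\times n$ block diagonal matrix with $n_2$ diagonal blocks all equal to $M$. Then $$R^{-1}=L_p^{H}\,D(V'^{-1})\,L_p-L_q^{H}\,D(V^{-1})\,L_q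 .$$
   Context: $X^H$ denotes the conjugate transpose. Let $e_0,\dots,e_{n-1}$ be the canonical basis column vectors of $\mathbb{C}^n$. Generalized reflection coefficients of $R$: $p_{k,k}=q_{k,k}=e_k$ for $0\le k\le n-1$; $v_{k,l}:=q_{k,l}^TRe_l$, $v'_{k,l}:=p_{k,l}^TRe_k$ (positive reals); and for $0\le k<l\le n-1$, recursively in $l-k$: $a_{k,l}=\dfrac{p_{k,l-1}^TRe_l}{v_{k+1,l}}$, $a'_{k,l}=\dfrac{q_{k+1,l}^TRe_k}{v'_{k,l-1}}$, $p_{k,l}=p_{k,l-1}-a_{k,l}q_{k+1,l}$, $q_{k,l}=q_{k+1,l}-a'_{k,l}p_{k,l-1}$. *)

(* Complex numbers: an arbitrary numClosedFieldType C
   (e.g. algC, or complex R over a real closed field); conjugation z^*. *)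
From HB Require Import structures.
From mathcomp Require Import all_boot all_order all_algebra.
Set Implicit Arguments. Unset Strict Implicit. Unset Printing Implicit Defensive.
Import Order.TTheory GRing.Theory Num.Theory.
Local Open Scope ring_scope.

Section Defs.
Variable C : numClosedFieldType.

Definition ctr m k (X : 'M[C]_(m, k)) : 'M[C]_(k, m) := (map_mx (fun z => z^*) X)^T.

(* entry of a matrix at natural-number indices (0 outside the range) *)
Definition mxn m k (M : 'M[C]_(m, k)) (i j : nat) : C :=
  match (insub i : option 'I_m), (insub j : option 'I_k) with
  | Some i', Some j' => M i' j'
  | _, _ => 0
  end.

Definition ecv n (k : nat) : 'cV[C]_n := \col_(i < n) (i == k :> nat)%:R.

Definition bil n (x : 'cV[C]_n) (R : 'M[C]_n) (y : 'cV[C]_n) : C :=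
  (x^T *m R *m y) 0 0.

(* pq R d k = (p_{k,k+d}, q_{k,k+d}), defined recursively in d = l - k *)
Fixpoint pq n (R : 'M[C]_n) (d : nat) : nat -> 'cV[C]_n * 'cV[C]_n :=
  match d with
  | 0 => fun k => (ecv n k, ecv n k)
  | d'.+1 => fun k =>
      let l := (k + d'.+1)%N in
      let p_k_lm1 := (pq R d' k).1 in
      let q_kp1_l := (pq R d' k.+1).2 in
      let a  := bil p_k_lm1 R (ecv n l) / bil q_kp1_l R (ecv n l) in
      let a' := bil q_kp1_l R (ecv n k) / bil p_k_lm1 R (ecv n k) in
      (p_k_lm1 - a *: q_kp1_l, q_kp1_l - a' *: p_k_lm1)
  end.

Definition pvec n (R : 'M[C]_n) (k l : nat) : 'cV[C]_n := (pq R (l - k) k).1.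
Definition qvec n (R : 'M[C]_n) (k l : nat) : 'cV[C]_n := (pq R (l - k) k).2.
Definition vcoef n (R : 'M[C]_n) (k l : nat) : C := bil (qvec R k l) R (ecv n l).
Definition vcoef' n (R : 'M[C]_n) (k l : nat) : C := bil (pvec R k l) R (ecv n k).

Definition herm_mx n (R : 'M[C]_n) : Prop := ctr R = R.
Definition posdef n (R : 'M[C]_n) : Prop :=
  forall x : 'cV[C]_n, x != 0 -> 0 < (ctr x *m R *m x) 0 0.

(* R = (R_{b-a})_{a,b} with n1 x n1 blocks: entry (a*n1+i1, b*n1+j1) depends
   only on b - a, i1, j1. *)
Definition block_toeplitz n1 n2 (R : 'M[C]_(n1 * n2)) : Prop :=
  forall i j i' j' : 'I_(n1 * n2),
    (i %% n1 = i' %% n1)%N -> (j %% n1 = j' %% n1)%N ->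
    (j %/ n1 + i' %/ n1 = j' %/ n1 + i %/ n1)%N -> R i j = R i' j'.

Section Blocks.
Variables n1 n2 : nat.
Variable R : 'M[C]_(n1 * n2).
Let n := (n1 * n2)%N.

Definition Pblk (m : nat) : 'M[C]_n1 :=
  \matrix_(i1 < n1, j < n1) mxn (pvec R j n.-1) (m * n1 + i1)%N 0.
Definition Qblk (m : nat) : 'M[C]_n1 :=
  \matrix_(i1 < n1, j < n1) mxn (qvec R 0 (n - n1 + j)%N) ((n2.-1 - m) * n1 + i1)%N 0.
Definition Vp : 'M[C]_n1 := \matrix_(i < n1, j < n1) ((i == j)%:R * vcoef' R i n.-1).
Definition Vq : 'M[C]_n1 := \matrix_(i < n1, j < n1) ((i == j)%:R * vcoef R 0 (n - n1 + i)%N).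

Definition Lp : 'M[C]_n :=
  \matrix_(i < n, j < n)
    if (i %/ n1 <= j %/ n1)%N
    then mxn (Pblk (j %/ n1 - i %/ n1)%N)^T (i %% n1)%N (j %% n1)%N else 0.
Definition Lq : 'M[C]_n :=
  \matrix_(i < n, j < n)
    if (i %/ n1 < j %/ n1)%N
    then mxn (Qblk (n2 - (j %/ n1 - i %/ n1))%N)^T (i %% n1)%N (j %% n1)%N else 0.
End Blocks.

Definition blkdiag n1 n2 (M : 'M[C]_n1) : 'M[C]_(n1 * n2) :=
  \matrix_(i < n1 * n2, j < n1 * n2)
    if (i %/ n1 == j %/ n1)%N then mxn M (i %% n1)%N (j %% n1)%N else 0.
End Defs.

(* Levinson's recursion makes p_{j,n-1} (resp. q_{0,l}) a vector with a unit pivot at j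
   (resp. l) that is R-orthogonal to the basis vectors after (resp. before) it.  Hence both
   families diagonalize the form x^T R y, and
     R^{-1} = sum_j conj(p_{j,n-1}) p_{j,n-1}^T / v'_{j,n-1}
            = sum_l conj(q_{0,l}) q_{0,l}^T / v_{0,l}.
   The p-terms with j >= n1 form the zero-padded inverse of the trailing principal submatrix
   of order n - n1.  By block Toeplitz invariance this is the inverse of the leading one moved
   a block down the diagonal, i.e. the shifted q-sum without its last n1 terms.  So
   R^{-1} = A + S (R^{-1} - B) S^T, where A collects the first n1 p-terms, B the last n1
   q-terms and S is the block down-shift.  Unrolling n2 times (S^n2 = 0) gives the formula,
   since L_p^H D(V'^{-1}) L_p = sum_k S^k A (S^k)^T
   and   L_q^H D(V^{-1}) L_q = sum_k S^(k+1) B (S^(k+1))^T. *)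

From HB Require Import structures.
From mathcomp Require Import all_boot all_order all_algebra.
From mathcomp Require Import zify ring.
Set Implicit Arguments. Unset Strict Implicit. Unset Printing Implicit Defensive.
Import Order.TTheory GRing.Theory Num.Theory.
Local Open Scope ring_scope.

Section NatIndexedEntries.
Variable C : numClosedFieldType.

Lemma mxnE m k (M : 'M[C]_(m, k)) (i : 'I_m) (j : 'I_k) : mxn M i j = M i j.
Proof. by rewrite /mxn !valK. Qed.

Lemma mxn_ord m k (M : 'M[C]_(m, k)) i j (hi : (i < m)%N) (hj : (j < k)%N) :
  mxn M i j = M (Ordinal hi) (Ordinal hj).
Proof. by rewrite -mxnE. Qed.

Lemma mxn_out_row m k (M : 'M[C]_(m, k)) i j : (m <= i)%N -> mxn M i j = 0.
Proof. by move=> h; rewrite /mxn insubN // -leqNgt. Qed.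

Lemma mxn_out_col m k (M : 'M[C]_(m, k)) i j : (k <= j)%N -> mxn M i j = 0.
Proof. by move=> h; rewrite /mxn; case: insub => // a; rewrite insubN // -leqNgt. Qed.

Lemma mxnD m k (A B : 'M[C]_(m, k)) i j : mxn (A + B) i j = mxn A i j + mxn B i j.
Proof.
case: (ltnP i m) => hi; last by rewrite !mxn_out_row ?addr0.
case: (ltnP j k) => hj; last by rewrite !mxn_out_col ?addr0.
by rewrite !(mxn_ord _ hi hj) mxE.
Qed.

Lemma mxnB m k (A B : 'M[C]_(m, k)) i j : mxn (A - B) i j = mxn A i j - mxn B i j.
Proof.
case: (ltnP i m) => hi; last by rewrite !mxn_out_row ?subr0.
case: (ltnP j k) => hj; last by rewrite !mxn_out_col ?subr0.
by rewrite !(mxn_ord _ hi hj) !mxE.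
Qed.

Lemma mxn_ctr m k (M : 'M[C]_(m, k)) i j : mxn (ctr M) i j = (mxn M j i)^*.
Proof.
case: (ltnP i k) => hi; last by rewrite mxn_out_row ?mxn_out_col ?conjC0.
case: (ltnP j m) => hj; last by rewrite mxn_out_col ?mxn_out_row ?conjC0.
by rewrite (mxn_ord _ hi hj) (mxn_ord _ hj hi) !mxE.
Qed.

Lemma mxn_mulmx m p k (A : 'M[C]_(m, p)) (B : 'M[C]_(p, k)) i j :
  mxn (A *m B) i j = \sum_(0 <= t < p) mxn A i t * mxn B t j.
Proof.
case: (ltnP i m) => hi; last first.
  by rewrite mxn_out_row // big1 // => t _; rewrite mxn_out_row // mul0r.
case: (ltnP j k) => hj; last first.
  by rewrite mxn_out_col // big1 // => t _; rewrite (mxn_out_col B) // mulr0.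
rewrite !mxn_ord mxE big_mkord; apply: eq_bigr => t _.
by rewrite -(mxnE A) -(mxnE B).
Qed.

Lemma big_nat_single (F : nat -> C) t N : (t < N)%N ->
  (forall s, (s < N)%N -> s <> t -> F s = 0) -> \sum_(0 <= s < N) F s = F t.
Proof.
move=> ht h; rewrite big_mkord (bigD1 (Ordinal ht)) //= big1 ?addr0 // => s hs.
by apply: h => // e; move/eqP: hs; apply; apply: val_inj.
Qed.

Lemma big_nat_divmod (F : nat -> C) k N :
  \sum_(0 <= t < k * N) F t = \sum_(0 <= q < N) \sum_(0 <= r < k) F (q * k + r)%N.
Proof.
rewrite mulnC big_nat_mul; apply: eq_bigr => q _.
rewrite -{1}[(q * k)%N]add0n big_addn mulSn addnK.
by apply: eq_bigr => r _; rewrite addnC.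
Qed.

Lemma mxn_rowsmx m k (g : nat -> 'cV[C]_k) r c : (r < m)%N ->
  mxn (\matrix_(i < m) (g i)^T) r c = mxn (g r) c 0.
Proof.
move=> hr; case: (ltnP c k) => hc; last by rewrite mxn_out_col // mxn_out_row.
by rewrite (mxn_ord _ hr hc) (mxn_ord (g r) hc (ltn0Sn 0)) !mxE; congr (g r _ _); apply: val_inj.
Qed.

End NatIndexedEntries.

Section BilinearForm.
Variable C : numClosedFieldType.

Definition conjv n (x : 'cV[C]_n) : 'cV[C]_n := map_mx (fun z => z^*) x.

Lemma ctr_conjv n (x : 'cV[C]_n) : ctr (conjv x) = x^T.
Proof. by apply/matrixP => i j; rewrite !mxE conjCK. Qed.

Lemma ctr_tr n (x : 'cV[C]_n) : ctr x^T = conjv x.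
Proof. by apply/matrixP => i j; rewrite !mxE. Qed.

Lemma conjv_eq0 n (x : 'cV[C]_n) : (conjv x == 0) = (x == 0).
Proof.
apply/eqP/eqP => [h|->]; last by apply/matrixP => i j; rewrite !mxE conjC0.
by apply/matrixP => i j; move/matrixP/(_ i j): h; rewrite !mxE => /eqP; rewrite conjC_eq0 => /eqP.
Qed.

Lemma mulmx_ecv p n (A : 'M[C]_(p, n)) i (m : 'I_n) : (A *m ecv C n m) i 0 = A i m.
Proof.
rewrite mxE (bigD1 m) //= big1 ?addr0 => [|t /negPf htm]; rewrite !mxE ?eqxx ?mulr1 //.
by rewrite [(_ == _ :> nat)]htm mulr0.
Qed.

Lemma eq_mx_ecv n (A B : 'M[C]_n) :
  (forall m : 'I_n, A *m ecv C n m = B *m ecv C n m) -> A = B.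
Proof. by move=> h; apply/matrixP => i m; rewrite -(mulmx_ecv A) -(mulmx_ecv B) h. Qed.

Lemma bil_ecv n x (R : 'M[C]_n) (l : 'I_n) : bil x R (ecv C n l) = (x^T *m R) 0 l.
Proof. by rewrite /bil mulmx_ecv. Qed.

Lemma bil_sum_ecv n x (R : 'M[C]_n) z :
  bil x R z = \sum_(s < n) bil x R (ecv C n s) * z s 0.
Proof. by rewrite {1}/bil mxE; apply: eq_bigr => s _; rewrite bil_ecv. Qed.

Lemma bilBl n x y c (R : 'M[C]_n) z : bil (x - c *: y) R z = bil x R z - c * bil y R z.
Proof. by rewrite /bil linearB /= linearZ /= !mulmxBl -!scalemxAl !mxE. Qed.

Lemma bilBr n x (R : 'M[C]_n) y z : bil x R (y - z) = bil x R y - bil x R z.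
Proof. by rewrite /bil mulmxBr !mxE. Qed.

Lemma bil_sumr n x (R : 'M[C]_n) (I : finType) (P : pred I) (c : I -> C) g :
  bil x R (\sum_(j | P j) c j *: g j) = \sum_(j | P j) c j * bil x R (g j).
Proof. by rewrite /bil mulmx_sumr summxE; apply: eq_bigr => j _; rewrite -scalemxAr mxE. Qed.

Lemma bil_row n (D R : 'M[C]_n) i (t : 'I_n) : bil (row i D)^T R (ecv C n t) = (D *m R) i t.
Proof. by rewrite bil_ecv trmxK -row_mul mxE. Qed.

End BilinearForm.

Section PositiveDefinite.
Variable C : numClosedFieldType.
Variables (n : nat) (R : 'M[C]_n).
Hypotheses (Hherm : herm_mx R) (Hpd : posdef R).
Local Notation ecv := (ecv C n).

Lemma bil_conjv_sym (x y : 'cV[C]_n) : bil x R (conjv y) = (bil y R (conjv x))^*.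
Proof.
have hermE i j : R i j = (R j i)^* by rewrite -{1}Hherm !mxE.
have bilE u v : bil u R v = \sum_(s < n) \sum_(t < n) u t 0 * R t s * v s 0.
  rewrite /bil mxE; apply: eq_bigr => s _; rewrite mxE mulr_suml.
  by apply: eq_bigr => t _; rewrite !mxE.
rewrite !bilE rmorph_sum /= exchange_big; apply: eq_bigr => s _.
rewrite rmorph_sum; apply: eq_bigr => t _.
by rewrite !rmorphM /= !mxE conjCK [R t s]hermE conjCK; ring.
Qed.

Lemma bil_conjv_gt0 (x : 'cV[C]_n) : x != 0 -> 0 < bil x R (conjv x).
Proof. by rewrite -conjv_eq0 => /Hpd; rewrite ctr_conjv. Qed.

Lemma bil_conjv_eq0 (x : 'cV[C]_n) : bil x R (conjv x) = 0 -> x = 0.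
Proof. by move=> h; apply/eqP/negPn/negP => /bil_conjv_gt0; rewrite h ltxx. Qed.

Lemma bil_pivot_gt0 (x : 'cV[C]_n) (t : 'I_n) : x t 0 = 1 ->
  (forall s : 'I_n, s != t -> bil x R (ecv s) * (x s 0)^* = 0) ->
  0 < bil x R (ecv t).
Proof.
move=> xt1 hs.
have x_neq0 : x != 0 by apply: contra_eq_neq xt1 => ->; rewrite mxE eq_sym oner_neq0.
have := bil_conjv_gt0 x_neq0; rewrite bil_sum_ecv (bigD1 t) //= big1 ?addr0.
  by rewrite mxE xt1 conjC1 mulr1.
by move=> s /hs; rewrite mxE.
Qed.

Definition pivot_vec (x : 'cV[C]_n) (k l piv : nat) : Prop :=
  [/\ forall i : 'I_n, ((i < k) || (l < i))%N -> x i 0 = 0,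
      forall i : 'I_n, i = piv :> nat -> x i 0 = 1 &
      forall s : 'I_n, (k <= s <= l)%N -> s <> piv :> nat -> bil x R (ecv s) = 0].

Lemma pivot_vec_gt0 x k l piv : (piv < n)%N -> pivot_vec x k l piv -> 0 < bil x R (ecv piv).
Proof.
move=> hpiv [x0 x1 xo]; apply: (@bil_pivot_gt0 x (Ordinal hpiv)); first exact: x1.
move=> s /eqP hs; have {}hs : s <> piv :> nat by move=> e; apply: hs; apply: val_inj.
case: (boolP (k <= s <= l)%N) => hin; first by rewrite xo // mul0r.
by rewrite x0 ?conjC0 ?mulr0 //; move: hin; lia.
Qed.

Lemma levinson_spec d k : (k + d < n)%N ->
  pivot_vec (pq R d k).1 k (k + d) k /\ pivot_vec (pq R d k).2 k (k + d) (k + d).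
Proof.
elim: d k => [|d IH] k hk.
  have e_spec : pivot_vec (ecv k) k k k.
    split=> [i hi|i hi|s hs ns]; rewrite ?mxE ?hi ?eqxx //; last by move: hs ns; lia.
    by rewrite (_ : (i == k :> nat) = false) //; apply/eqP; lia.
  by rewrite addn0; split.
have hk1 : (k + d < n)%N by lia.
have hk2 : (k.+1 + d < n)%N by lia.
have [[p0 p1 po] _] := IH k hk1; have [_ [q0 q1 qo]] := IH k.+1 hk2.
rewrite addSnnS in q0 q1 qo *; rewrite /=.
move: (pq R d k).1 (pq R d k.+1).2 p0 p1 po q0 q1 qo => p q p0 p1 po q0 q1 qo.
have vq : bil q R (ecv (k + d.+1)) != 0.
  by rewrite gt_eqF // (pivot_vec_gt0 _ (And3 q0 q1 qo)).
have vp : bil p R (ecv k) != 0.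
  by rewrite gt_eqF // (pivot_vec_gt0 _ (And3 p0 p1 po)) //; lia.
split; split.
- by move=> i hi; rewrite !mxE p0 ?q0 ?mulr0 ?subr0 //; lia.
- by move=> i hi; rewrite !mxE p1 // q0 ?mulr0 ?subr0 //; lia.
- move=> s hs ns; rewrite bilBl.
  have [hsl|->] : (s < k + d.+1)%N \/ s = k + d.+1 :> nat by lia.
    by rewrite po ?qo ?mulr0 ?subr0 //; lia.
  by rewrite divfK // subrr.
- by move=> i hi; rewrite !mxE p0 ?q0 ?mulr0 ?subr0 //; lia.
- by move=> i hi; rewrite !mxE q1 ?p0 ?mulr0 ?subr0 //; lia.
- move=> s hs ns; rewrite bilBl.
  have [hsk|->] : (k < s)%N \/ s = k :> nat by lia.
    by rewrite po ?qo ?mulr0 ?subr0 //; lia.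
  by rewrite divfK // subrr.
Qed.

Lemma pvec_spec k l : (k <= l < n)%N -> pivot_vec (pvec R k l) k l k.
Proof. by case/andP=> hkl hl; have [] := @levinson_spec (l - k) k; rewrite subnKC. Qed.

Lemma qvec_spec k l : (k <= l < n)%N -> pivot_vec (qvec R k l) k l l.
Proof. by case/andP=> hkl hl; have [] := @levinson_spec (l - k) k; rewrite subnKC. Qed.

Lemma vcoef'_gt0 k l : (k <= l < n)%N -> 0 < vcoef' R k l.
Proof. by move=> hkl; apply: pivot_vec_gt0 (pvec_spec hkl); lia. Qed.

Lemma vcoef_gt0 k l : (k <= l < n)%N -> 0 < vcoef R k l.
Proof. by move=> hkl; apply: pivot_vec_gt0 (qvec_spec hkl); lia. Qed.

(* [W] is the inverse of the principal submatrix of [R] on [I], padded with zeros. *)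
Definition inv_on (I : pred nat) (W : 'M[C]_n) : Prop :=
  (forall a b : 'I_n, ~~ I b -> W a b = 0) /\
  (forall m : 'I_n, I m -> W *m R *m ecv m = ecv m).

Lemma inv_on_uniq I W1 W2 : inv_on I W1 -> inv_on I W2 -> W1 = W2.
Proof.
move=> [s1 c1] [s2 c2]; apply/matrixP => i s; apply/eqP; rewrite -subr_eq0.
pose D := W1 - W2.
have D_col (t : 'I_n) : ~~ I t -> D i t = 0 by move=> ht; rewrite !mxE s1 ?s2 ?subrr.
have DR_col (t : 'I_n) : I t -> (D *m R) i t = 0.
  by move=> ht; rewrite -mulmx_ecv !mulmxBl c1 // c2 // subrr mxE.
have : (row i D)^T = 0.
  apply: bil_conjv_eq0; rewrite bil_sum_ecv big1 // => t _.
  case: (boolP (I t)) => ht; first by rewrite bil_row DR_col // mul0r.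
  by rewrite 2!mxE [row _ _ _ _]mxE D_col // conjC0 mulr0.
by move/matrixP/(_ s 0); rewrite !mxE => ->.
Qed.

Lemma inv_on_invmx (I : pred nat) W : (forall i : 'I_n, I i) -> inv_on I W -> invmx R = W.
Proof.
move=> hI [_ hc].
have WR : W *m R = 1%:M by apply: eq_mx_ecv => m; rewrite hc // mul1mx.
have [_ uR] := mulmx1_unit WR.
by rewrite -[W]mulmx1 -(mulmxV uR) mulmxA WR mul1mx.
Qed.

Section OrthogonalFamily.
Variables (I : pred nat) (rk : 'I_n -> nat) (f : 'I_n -> 'cV[C]_n).
Hypothesis rk_inj : injective rk.
Hypothesis f_supp : forall j s : 'I_n, I j -> ~~ I s || (rk s < rk j)%N -> f j s 0 = 0.
Hypothesis f_pivot : forall j : 'I_n, I j -> f j j 0 = 1.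
Hypothesis f_orth : forall j s : 'I_n, I j -> (rk j < rk s)%N -> bil (f j) R (ecv s) = 0.

Definition family_pivot (j : 'I_n) := bil (f j) R (ecv j).

Definition dyad_sum : 'M[C]_n :=
  \sum_(j : 'I_n | I j) (family_pivot j)^-1 *: (conjv (f j) *m (f j)^T).

Lemma family_offdiag (j s : 'I_n) : I j -> s != j -> bil (f j) R (ecv s) * (f j s 0)^* = 0.
Proof.
move=> Ij sj; case: (ltngtP (rk j) (rk s)) => h.
- by rewrite f_orth // mul0r.
- by rewrite f_supp ?h ?orbT // conjC0 mulr0.
- by move/rk_inj: h sj => ->; rewrite eqxx.
Qed.

Lemma family_pivot_neq0 (j : 'I_n) : I j -> family_pivot j != 0.
Proof.
by move=> Ij; rewrite gt_eqF // bil_pivot_gt0 ?f_pivot // => s; apply: family_offdiag.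
Qed.

Lemma bil_family (i j : 'I_n) : I i -> I j ->
  bil (f i) R (conjv (f j)) = if i == j then family_pivot i else 0.
Proof.
have bil_lt (u v : 'I_n) : I u -> I v -> (rk u < rk v)%N -> bil (f u) R (conjv (f v)) = 0.
  move=> Iu Iv h; rewrite bil_sum_ecv big1 // => s _; rewrite mxE.
  case: (ltnP (rk u) (rk s)) => h2; first by rewrite f_orth // mul0r.
  by rewrite f_supp ?conjC0 ?mulr0 //; apply/orP; right; apply: leq_ltn_trans h2 h.
move=> Ii Ij; case: eqP => [<-|ne].
  rewrite bil_sum_ecv (bigD1 i) //= big1 ?addr0; first by rewrite mxE f_pivot // conjC1 mulr1.
  by move=> s si; rewrite mxE family_offdiag.
case: (ltngtP (rk i) (rk j)) => h; first exact: bil_lt.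
  by rewrite bil_conjv_sym bil_lt // conjC0.
by move/rk_inj: h ne.
Qed.

Lemma family_coord_eq0 (z : 'cV[C]_n) : (forall s : 'I_n, ~~ I s -> z s 0 = 0) ->
  (forall i : 'I_n, I i -> bil (f i) R z = 0) -> z = 0.
Proof.
move=> z_supp z_orth.
suff z_lt t (s : 'I_n) : (rk s < t)%N -> z s 0 = 0.
  by apply/matrixP => s c; rewrite [c]ord1 mxE; apply: (z_lt (rk s).+1).
elim: t s => [//|t IH] s hs.
case: (ltnP (rk s) t) => h; first exact: IH.
case: (boolP (I s)) => Is; last exact: z_supp.
have := z_orth s Is; rewrite bil_sum_ecv (bigD1 s) //= big1 ?addr0.
  by move/eqP; rewrite mulf_eq0 (negbTE (family_pivot_neq0 Is)) => /eqP.
move=> u us; case: (ltngtP (rk s) (rk u)) => h2.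
- by rewrite f_orth // mul0r.
- by rewrite IH ?mulr0 //; lia.
- by move/rk_inj: h2 us => ->; rewrite eqxx.
Qed.

Lemma dyad_sum_inv_on : inv_on I dyad_sum.
Proof.
split=> [a b Ib|m Im].
  rewrite summxE big1 // => j Ij.
  by rewrite !mxE big_ord1 !mxE (f_supp (s := b)) ?Ib // !mulr0.
pose c (j : 'I_n) := bil (f j) R (ecv m) / family_pivot j.
have -> : dyad_sum *m R *m ecv m = \sum_(j : 'I_n | I j) c j *: conjv (f j).
  rewrite !mulmx_suml; apply: eq_bigr => j Ij.
  rewrite -!scalemxAl -!mulmxA.
  have -> : (f j)^T *m (R *m ecv m) = (bil (f j) R (ecv m))%:M.
    by apply/matrixP => a b; rewrite [a]ord1 [b]ord1 mulmxA [RHS]mxE eqxx mulr1n.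
  by rewrite -scalemx1 -scalemxAr mulmx1 scalerA /c mulrC.
apply/eqP; rewrite -subr_eq0; apply/eqP; apply: family_coord_eq0.
- move=> s Is; rewrite !mxE summxE big1 => [|j Ij]; last first.
    by rewrite !mxE f_supp ?Is // conjC0 mulr0.
  rewrite (_ : (s == m :> nat) = false) ?subrr //.
  by apply: contraNF Is => /eqP e; rewrite e.
- move=> i Ii; rewrite bilBr bil_sumr (bigD1 i) //= big1 ?addr0 => [|j /andP [Ij ne]].
    by rewrite bil_family // eqxx /c divfK ?family_pivot_neq0 // subrr.
  by rewrite bil_family // eq_sym (negbTE ne) mulr0.
Qed.

End OrthogonalFamily.

End PositiveDefinite.

Section Shift.
Variables (C : numClosedFieldType) (n : nat).

(* [S^k M (S^k)^T] for the down-shift [S]. *)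
Definition shiftmx k (M : 'M[C]_n) : 'M[C]_n :=
  \matrix_(i, j) if ((k <= i) && (k <= j))%N then mxn M (i - k) (j - k) else 0.

Lemma mxn_shiftmx k M a b : (a < n)%N -> (b < n)%N ->
  mxn (shiftmx k M) a b = if ((k <= a) && (k <= b))%N then mxn M (a - k) (b - k) else 0.
Proof. by move=> ha hb; rewrite (mxn_ord _ ha hb) mxE. Qed.

Lemma shiftmxD k A B : shiftmx k (A + B) = shiftmx k A + shiftmx k B.
Proof. by apply/matrixP => i j; rewrite !mxE mxnD; case: ifP; rewrite ?addr0. Qed.

Lemma shiftmxB k A B : shiftmx k (A - B) = shiftmx k A - shiftmx k B.
Proof. by apply/matrixP => i j; rewrite !mxE mxnB; case: ifP; rewrite ?subr0. Qed.

Lemma shiftmx_comp a b M : shiftmx a (shiftmx b M) = shiftmx (a + b) M.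
Proof.
apply/matrixP => i j; rewrite !mxE; have := ltn_ord i; have := ltn_ord j => hj hi.
case: (boolP ((a <= i) && (a <= j))%N) => hij; last first.
  by rewrite ifF //; apply: contraNF hij; lia.
rewrite mxn_shiftmx; [|lia|lia].
by rewrite !subnDA; congr (if _ then _ else _); lia.
Qed.

Lemma shiftmx_out k M : (n <= k)%N -> shiftmx k M = 0.
Proof.
move=> hk; apply/matrixP => i j; rewrite !mxE ifF //.
by apply/negbTE; have := ltn_ord i; lia.
Qed.

Lemma shiftmx_unroll k (X Y : 'M[C]_n) N : (n <= N * k)%N ->
  X = Y + shiftmx k X -> X = \sum_(q < N) shiftmx (q * k) Y.
Proof.
move=> hN hX.
have unroll N' : X = \sum_(q < N') shiftmx (q * k) Y + shiftmx (N' * k) X.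
  elim: N' => [|N' IH].
    by rewrite big_ord0 add0r; apply/matrixP => i j; rewrite !mxE !subn0 mxnE.
  by rewrite big_ord_recr /= -addrA mulSnr -shiftmx_comp -shiftmxD -hX.
by rewrite {1}(unroll N) shiftmx_out ?addr0.
Qed.

Section ShiftInvariant.
Variables (R : 'M[C]_n) (k : nat).
Hypothesis R_shift : forall a b, (a + k < n)%N -> (b + k < n)%N ->
  mxn R (a + k) (b + k) = mxn R a b.

Lemma mxn_shiftmx_mulmx W a b : (forall c t, (n - k <= t)%N -> mxn W c t = 0) ->
  (a < n)%N -> (k <= b < n)%N ->
  mxn (shiftmx k W *m R) a b = if (k <= a)%N then mxn (W *m R) (a - k) (b - k) else 0.
Proof.
move=> W_high ha /andP [hkb hb]; rewrite mxn_mulmx (big_cat_nat (n := k)) /=; [|lia|lia].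
rewrite big_nat_cond big1 ?add0r; last first.
  move=> t /andP [/andP [_ ht] _]; rewrite mxn_shiftmx; [|lia|lia].
  by rewrite (leqNgt k t) ht andbF mul0r.
rewrite -{1}[k]add0n big_addn; case: ifP => hka; last first.
  apply: big1_seq => t /andP [_]; rewrite mem_index_iota => /andP [_ ht].
  by rewrite mxn_shiftmx ?hka /= ?mul0r //; lia.
rewrite mxn_mulmx [RHS](big_cat_nat (n := n - k)) /=; [|lia|lia].
rewrite [X in _ = _ + X]big_nat_cond [X in _ = _ + X]big1 ?addr0; last first.
  by move=> t /andP [/andP [ht _] _]; rewrite W_high // mul0r.
apply: eq_big_nat => t /andP [_ ht]; rewrite mxn_shiftmx; [|lia|lia].
by rewrite hka leq_addl addnK -[in LHS](subnK hkb) R_shift //; lia.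
Qed.

Lemma inv_on_shift W : inv_on R [pred i | (i < n - k)%N] W ->
  inv_on R [pred i | (k <= i)%N] (shiftmx k W).
Proof.
case=> W_supp W_col; split=> [a b|m /= hm].
  by rewrite /= -ltnNge => hb; rewrite mxE (leqNgt k b) hb andbF.
have W_high c t : (n - k <= t)%N -> mxn W c t = 0.
  move=> ht; case: (ltnP c n) => hc; last by rewrite mxn_out_row.
  case: (ltnP t n) => htn; last by rewrite mxn_out_col.
  by rewrite (mxn_ord _ hc htn) W_supp //= -leqNgt.
apply/matrixP => i c; rewrite [c]ord1 mulmx_ecv [RHS]mxE -mxnE.
rewrite mxn_shiftmx_mulmx ?hm ?ltn_ord //.
case: (leqP k i) => hki; last by rewrite (_ : (i == m :> nat) = false) //; apply/eqP; lia.
have hik : (i - k < n)%N by have := ltn_ord i; lia.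
have hmk : (m - k < n)%N by have := ltn_ord m; lia.
rewrite (mxn_ord _ hik hmk) -mulmx_ecv W_col /= ?mxE; last by have := ltn_ord m; lia.
by congr (_%:R); apply/eqP/eqP => /=; lia.
Qed.

End ShiftInvariant.

End Shift.

Section Diagonal.
Variable C : numClosedFieldType.

Lemma ctr_diag_quad k m (G : 'M[C]_(k, m)) (d : 'rV[C]_k) :
  ctr G *m diag_mx d *m G = \sum_(i < k) d 0 i *: (ctr (row i G) *m row i G).
Proof.
apply/matrixP => a b; rewrite summxE mxE; apply: eq_bigr => i _.
rewrite mxE (bigD1 i) //= big1 ?addr0 => [|j ji]; last by rewrite !mxE (negbTE ji) mulr0n mulr0.
by rewrite !mxE big_ord1 !mxE eqxx mulr1n mulrCA mulrA.
Qed.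

Lemma invmx_diag k (d : 'I_k -> C) : (forall i, d i != 0) ->
  invmx (\matrix_(i, j) ((i == j)%:R * d i)) = diag_mx (\row_i (d i)^-1).
Proof.
move=> d_neq0.
have dd : \matrix_(i, j) ((i == j)%:R * d i) *m diag_mx (\row_i (d i)^-1) = 1%:M.
  apply/matrixP => i j; rewrite !mxE (bigD1 i) //= big1 ?addr0 => [|l li].
    by rewrite !mxE eqxx mul1r mulrnAr mulfV.
  by rewrite !mxE [i == l]eq_sym (negbTE li) !mul0r.
have [ud _] := mulmx1_unit dd.
by rewrite -[invmx _]mulmx1 -dd mulmxA mulVmx // mul1mx.
Qed.

End Diagonal.

Section BlockDiagonal.
Variables (C : numClosedFieldType) (n1 n2 : nat).
Hypothesis n1_gt0 : (0 < n1)%N.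
Local Notation n := (n1 * n2)%N.

Lemma mxn_blkdiag (M : 'M[C]_n1) q q' r r' :
  (q < n2)%N -> (q' < n2)%N -> (r < n1)%N -> (r' < n1)%N ->
  mxn (blkdiag n2 M) (q * n1 + r) (q' * n1 + r') = (q == q')%:R * mxn M r r'.
Proof.
move=> hq hq' hr hr'.
have hi : (q * n1 + r < n)%N by nia.
have hj : (q' * n1 + r' < n)%N by nia.
rewrite (mxn_ord _ hi hj).
rewrite mxE /= !divnMDl // !divn_small // !addn0 !modnMDl !modn_small //.
by case: (q == q'); rewrite ?mul1r ?mul0r.
Qed.

Lemma blkdiag_quad (L : 'M[C]_n) (G : 'M[C]_(n1, n)) (M : 'M[C]_n1) o :
  (forall q r b, (q < n2)%N -> (r < n1)%N -> (b < n)%N ->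
    mxn L (q * n1 + r) b = if (q * n1 + o <= b)%N then mxn G r (b - (q * n1 + o)) else 0) ->
  ctr L *m blkdiag n2 M *m L = \sum_(q < n2) shiftmx (q * n1 + o) (ctr G *m M *m G).
Proof.
move=> hL; apply/matrixP => a b; rewrite summxE -mxnE mxn_mulmx big_nat_divmod big_mkord.
apply: eq_bigr => q _; have hq := ltn_ord q; rewrite -mxnE mxn_shiftmx //.
have LM_col r' : (r' < n1)%N -> mxn (ctr L *m blkdiag n2 M) a (q * n1 + r') =
    \sum_(0 <= r < n1) (mxn L (q * n1 + r) a)^* * mxn M r r'.
  move=> hr'; rewrite mxn_mulmx big_nat_divmod (big_nat_single (t := q)) //.
    apply: eq_big_nat => r /andP [_ hr].
    by rewrite mxn_ctr mxn_blkdiag // eqxx mul1r.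
  move=> q' hq' ne; rewrite big1_seq // => r /andP [_]; rewrite mem_index_iota => /andP [_ hr].
  by rewrite mxn_blkdiag // (_ : (q' == q) = false) ?mul0r ?mulr0 //; apply/eqP.
rewrite (eq_big_nat _ _ (F2 := fun r' =>
  (\sum_(0 <= r < n1) (mxn L (q * n1 + r) a)^* * mxn M r r') * mxn L (q * n1 + r') b));
  last by move=> r' /andP [_ hr']; rewrite LM_col.
case: ifP => [/andP [ha hb]|hab]; last first.
  apply: big1_seq => r' /andP [_]; rewrite mem_index_iota => /andP [_ hr'].
  case: (boolP (q * n1 + o <= b)%N) => hb; last by rewrite hL // ifN // mulr0.
  rewrite big1_seq ?mul0r // => r /andP [_]; rewrite mem_index_iota => /andP [_ hr].
  by rewrite hL // ifF ?conjC0 ?mul0r //; apply: contraFF hab => ->.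
rewrite mxn_mulmx; apply: eq_big_nat => r' /andP [_ hr'].
rewrite mxn_mulmx hL // hb; congr (_ * _); apply: eq_big_nat => r /andP [_ hr].
by rewrite hL // ha mxn_ctr.
Qed.

End BlockDiagonal.

Section BlockToeplitzInverse.
Variables (C : numClosedFieldType) (n1 n2 : nat).
Hypothesis n1_gt0 : (0 < n1)%N.
Local Notation n := (n1 * n2)%N.
Variable R : 'M[C]_n.
Hypotheses (Hherm : herm_mx R) (Hpd : posdef R) (Htoep : block_toeplitz R).

Lemma block_toeplitz_shift a b : (a + n1 < n)%N -> (b + n1 < n)%N ->
  mxn R (a + n1) (b + n1) = mxn R a b.
Proof.
move=> ha hb; have ha' : (a < n)%N by lia. have hb' : (b < n)%N by lia.
rewrite (mxn_ord _ ha hb) (mxn_ord _ ha' hb'); apply: Htoep => /=; rewrite ?modnDr //.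
have divS x : ((x + n1) %/ n1 = (x %/ n1).+1)%N.
  by rewrite addnC -[X in (X + _)%N]mul1n divnMDl.
by rewrite !divS; lia.
Qed.

Definition pfam (j : 'I_n) : 'cV[C]_n := pvec R j n.-1.
Definition qfam (l : 'I_n) : 'cV[C]_n := qvec R 0 l.
Definition pdyad k := dyad_sum R [pred j | (k <= j)%N] pfam.
Definition qdyad m := dyad_sum R [pred l | (l < m)%N] qfam.

Lemma pdyad_inv_on k : inv_on R [pred j | (k <= j)%N] (pdyad k).
Proof.
have p_spec (j : 'I_n) : pivot_vec R (pfam j) j n.-1 j.
  have n_gt0 : (0 < n)%N by apply: leq_ltn_trans (ltn_ord j).
  by apply: (pvec_spec Hpd); rewrite -ltnS prednK // ltn_ord ?leqnn ?ltn_predL.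
apply: (@dyad_sum_inv_on _ _ _ Hherm Hpd _ (@nat_of_ord n)) => [|j s /= hj hs|j _|j s _ hs].
- exact: val_inj.
- by have [p0 _ _] := p_spec j; apply: p0; move: hj hs; lia.
- by have [_ p1 _] := p_spec j; apply: p1.
- by have [_ _ po] := p_spec j; apply: po; have := ltn_ord s; lia.
Qed.

Lemma qdyad_inv_on m : inv_on R [pred l | (l < m)%N] (qdyad m).
Proof.
have q_spec (l : 'I_n) : pivot_vec R (qfam l) 0 l l.
  by apply: (qvec_spec Hpd); have := ltn_ord l; lia.
apply: (@dyad_sum_inv_on _ _ _ Hherm Hpd _ (fun l : 'I_n => n - l)%N)
  => [l l' /= e|l s /= hl hs|l _|l s _ /= hs].
- by apply: ord_inj; have := ltn_ord l; have := ltn_ord l'; lia.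
- by have [q0 _ _] := q_spec l; apply: q0; have := ltn_ord s; have := ltn_ord l; lia.
- by have [_ q1 _] := q_spec l; apply: q1.
- by have [_ _ qo] := q_spec l; apply: qo; have := ltn_ord s; have := ltn_ord l; lia.
Qed.

Lemma invmx_pdyad : invmx R = pdyad 0.
Proof. exact: inv_on_invmx (fun j : 'I_n => leq0n j) (pdyad_inv_on 0). Qed.

Lemma invmx_qdyad : invmx R = qdyad n.
Proof. exact: inv_on_invmx (fun l : 'I_n => ltn_ord l) (qdyad_inv_on n). Qed.

Lemma pdyad_shift : pdyad n1 = shiftmx n1 (qdyad (n - n1)).
Proof.
apply: (inv_on_uniq Hpd (pdyad_inv_on n1)).
by apply: inv_on_shift (qdyad_inv_on _); apply: block_toeplitz_shift.
Qed.

(* [Gp] = [P_0^T ... P_(n2-1)^T] is the first block row of [Lp]; [Gq] =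
   [Q_(n2-1)^T ... Q_0^T] is the first block row of [Lq] moved one block to the left. *)
Definition Gp : 'M[C]_(n1, n) := \matrix_(r < n1) (pvec R r n.-1)^T.
Definition Gq : 'M[C]_(n1, n) := \matrix_(r < n1) (qvec R 0 (n - n1 + r))^T.

Lemma mxn_Lp q r b : (q < n2)%N -> (r < n1)%N -> (b < n)%N ->
  mxn (Lp R) (q * n1 + r) b = if (q * n1 <= b)%N then mxn Gp r (b - q * n1) else 0.
Proof.
move=> hq hr hb; have hi : (q * n1 + r < n)%N by nia.
rewrite (mxn_ord _ hi hb) mxE /= divnMDl // divn_small // addn0 modnMDl modn_small //.
rewrite -leq_divRL //; case: ifP => // hqb.
rewrite (mxn_rowsmx (fun j => pvec R j n.-1)) //.
rewrite (@mxn_ord _ _ _ _ r (b %% n1) hr (ltn_pmod b n1_gt0)) !mxE.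
congr (mxn _ _ 0) => /=; rewrite [in RHS](divn_eq b n1).
by move: hqb; move: (b %/ n1)%N (b %% n1)%N => X Y hqb; nia.
Qed.

Lemma mxn_Lq q r b : (q < n2)%N -> (r < n1)%N -> (b < n)%N ->
  mxn (Lq R) (q * n1 + r) b = if (q * n1 + n1 <= b)%N then mxn Gq r (b - (q * n1 + n1)) else 0.
Proof.
move=> hq hr hb; have hi : (q * n1 + r < n)%N by nia.
rewrite (mxn_ord _ hi hb) mxE /= divnMDl // divn_small // addn0 modnMDl modn_small //.
rewrite -mulSnr -leq_divRL //; case: ifP => // hqb.
have hX : (b %/ n1 < n2)%N by rewrite ltn_divLR // mulnC.
rewrite (mxn_rowsmx (fun j => qvec R 0 (n - n1 + j))) //.
rewrite (@mxn_ord _ _ _ _ r (b %% n1) hr (ltn_pmod b n1_gt0)) !mxE.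
congr (mxn _ _ 0) => /=; rewrite [in RHS](divn_eq b n1).
by move: hqb hX; move: (b %/ n1)%N (b %% n1)%N => X Y hqb hX; nia.
Qed.

Lemma Lp_quad : ctr (Lp R) *m blkdiag n2 (invmx (Vp R)) *m Lp R =
  \sum_(q < n2) shiftmx (q * n1) (ctr Gp *m invmx (Vp R) *m Gp).
Proof.
rewrite (@blkdiag_quad _ _ _ n1_gt0 _ Gp _ 0) => [|q r b]; last by rewrite addn0; apply: mxn_Lp.
by under eq_bigr do rewrite addn0.
Qed.

Lemma Lq_quad : ctr (Lq R) *m blkdiag n2 (invmx (Vq R)) *m Lq R =
  \sum_(q < n2) shiftmx (q * n1 + n1) (ctr Gq *m invmx (Vq R) *m Gq).
Proof. exact: (@blkdiag_quad _ _ _ n1_gt0 _ Gq _ n1) mxn_Lq. Qed.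

Hypothesis n2_gt0 : (0 < n2)%N.

Lemma n1_le_n : (n1 <= n)%N.
Proof. by rewrite leq_pmulr. Qed.

Lemma invmx_Vp : invmx (Vp R) = diag_mx (\row_(r < n1) (vcoef' R r n.-1)^-1).
Proof.
rewrite invmx_diag // => r; rewrite gt_eqF // (vcoef'_gt0 Hpd) //.
by have := ltn_ord r; have := n1_le_n; move: (n1 * n2)%N => N; lia.
Qed.

Lemma invmx_Vq : invmx (Vq R) = diag_mx (\row_(r < n1) (vcoef R 0 (n - n1 + r))^-1).
Proof.
rewrite invmx_diag // => r; rewrite gt_eqF // (vcoef_gt0 Hpd) //.
by have := ltn_ord r; have := n1_le_n; move: (n1 * n2)%N => N; lia.
Qed.

Lemma pdyad_split : pdyad 0 = ctr Gp *m invmx (Vp R) *m Gp + pdyad n1.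
Proof.
rewrite invmx_Vp ctr_diag_quad /pdyad /dyad_sum (bigID (fun j : 'I_n => (j < n1)%N)) /=.
congr (_ + _); last by apply: eq_bigl => j; rewrite /= -leqNgt.
under [RHS]eq_bigr => r _ do rewrite mxE rowK ctr_tr.
rewrite (big_ord_widen n (fun j =>
  (vcoef' R j n.-1)^-1 *: (conjv (pvec R j n.-1) *m (pvec R j n.-1)^T))) ?n1_le_n //.
Qed.

Lemma qdyad_split : qdyad n = qdyad (n - n1) + ctr Gq *m invmx (Vq R) *m Gq.
Proof.
rewrite invmx_Vq ctr_diag_quad /qdyad /dyad_sum (bigID (fun l : 'I_n => (l < n - n1)%N)) /=.
congr (_ + _); first by apply: eq_bigl => l; rewrite /= ltn_ord.
under [RHS]eq_bigr => r _ do rewrite mxE rowK ctr_tr.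
pose F l := (vcoef R 0 l)^-1 *: (conjv (qvec R 0 l) *m (qvec R 0 l)^T).
rewrite (eq_bigl (fun l : 'I_n => n - n1 <= l)%N) => [|l]; last by rewrite /= ltn_ord -leqNgt.
rewrite -(big_mkord (fun l => n - n1 <= l)%N F).
have -> : \sum_(0 <= l < n | (n - n1 <= l)%N) F l = \sum_(n - n1 <= l < n) F l.
  by rewrite [RHS](big_nat_widenl _ 0).
rewrite -{1}[(n - n1)%N]add0n big_addn subKn ?n1_le_n // big_mkord.
by apply: eq_bigr => r _; rewrite addnC.
Qed.

Lemma invmx_recurrence :
  invmx R = ctr Gp *m invmx (Vp R) *m Gp
            + shiftmx n1 (invmx R - ctr Gq *m invmx (Vq R) *m Gq).
Proof. by rewrite {1}invmx_pdyad pdyad_split pdyad_shift invmx_qdyad qdyad_split addrK. Qed.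

End BlockToeplitzInverse.

Unset Implicit Arguments.

Theorem mainTheorem5 (C : numClosedFieldType) (n1 n2 : nat)
  (Hn1 : (1 <= n1)%N) (Hn2 : (1 <= n2)%N) (R : 'M[C]_(n1 * n2))
  (Hherm : herm_mx R) (Hpd : posdef R) (Htoep : @block_toeplitz C n1 n2 R) :
  invmx R =
    ctr (@Lp C n1 n2 R) *m @blkdiag C n1 n2 (invmx (@Vp C n1 n2 R)) *m @Lp C n1 n2 R
    - ctr (@Lq C n1 n2 R) *m @blkdiag C n1 n2 (invmx (@Vq C n1 n2 R)) *m @Lq C n1 n2 R.
Proof.
have rec := invmx_recurrence Hn1 Hherm Hpd Htoep Hn2.
rewrite Lp_quad // Lq_quad // -sumrB.
under eq_bigr do rewrite -shiftmx_comp -shiftmxB.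
apply: shiftmx_unroll; first by rewrite mulnC.
by rewrite {1}rec shiftmxB addrCA addrC.
Qed.
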